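(* (i) There exists a non-commutative semiring $S$ (with identity) which is additively cancellative, reduced, centrally essential, and has no non-zero zero-divisors. (ii) Let $S$ be an additively cancellative reduced semiring and let $D(S)$ be its ring of differences. Then $S$ is commutative if and only if $D(S)$ is a centrally essential ring.
   Context: A semiring is a set $S$ with two binary operations $+$ and $\cdot$ such that $(S,+)$ is a commutative monoid with neutral element $0$, $(S,\cdot)$ is a monoid with identity $1$, multiplication distributes over addition on both sides, and $0s=s0=0$ for all $s\in S$ (i.e. an associative ring with $1$ except that additive inverses need not exist). The center of $S$ is $C(S)=\{s\in S: ss'=s's \text{ for all } s'\in S\}$. $S$ is centrally essential if for every non-zero $x\in S$ there exist non-zero $y,z\in C(S)$ with $xy=z$ (for rings this is the same definition). $S$ is reduced if for all $x,y\in S$, $x^2+y^2=xy+yx$ implies $x=y$. $S$ is additively cancellative if $x+z=y+z$ implies $x=y$ for all $x,y,z\in S$. An additively cancellative semiring $S$ embeds as a subsemiring in a ring $D(S)$, its ring of differences, in which every element has the form $x-y$ with $x,y\in S$; $D(S)$ is unique up to isomorphism over $S$. An element $a\in S$ is a left zero-divisor if $ab=0$ for some non-zero $b\in S$ (right zero-divisors analogously); ''without zero-divisors'' means there are no non-zero zero-divisors. *)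

From HB Require Import structures.
From mathcomp Require Import all_boot all_order all_algebra.
Set Implicit Arguments. Unset Strict Implicit. Unset Printing Implicit Defensive.
Import GRing.Theory.
Local Open Scope ring_scope.

(* Semirings (with identity, 0 absorbing, 0 = 1 allowed) are MathComp's
   pzSemiRingType; rings are pzRingType (which coerce to pzSemiRingType). *)

Definition central (S : pzSemiRingType) (s : S) : Prop :=
  forall s' : S, s * s' = s' * s.

Definition centrally_essential (S : pzSemiRingType) : Prop :=
  forall x : S, x <> 0 ->
    exists y z : S, [/\ central y, central z, y <> 0, z <> 0 & x * y = z].

Definition reduced (S : pzSemiRingType) : Prop :=
  forall x y : S, x ^+ 2 + y ^+ 2 = x * y + y * x -> x = y.

Definition add_cancellative (S : pzSemiRingType) : Prop :=
  forall x y z : S, x + z = y + z -> x = y.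

Definition commutative_sr (S : pzSemiRingType) : Prop :=
  forall x y : S, x * y = y * x.

Definition no_zero_divisors (S : pzSemiRingType) : Prop :=
  forall a b : S, a * b = 0 -> a = 0 \/ b = 0.

Definition ring_of_differences (S : pzSemiRingType) (R : pzRingType)
  (f : {rmorphism S -> R}) : Prop :=
  injective f /\ forall r : R, exists x y : S, r = f x - f y.

From HB Require Import structures.
From mathcomp Require Import all_boot all_order all_algebra ring zify.
Set Implicit Arguments. Unset Strict Implicit. Unset Printing Implicit Defensive.
Import GRing.Theory Num.Theory.
Local Open Scope ring_scope.

(* (i): the Lipschitz quaternions H form a non-commutative ring without zero
   divisors, since the four-square identity makes the norm multiplicative.
   The subsemiring {0} u (N_{>0} x H) of N x H inherits cancellativity and
   reducedness from N x H, positivity of the first coordinate excludes zero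
   divisors, and a non-zero (n, q) times the central element (1, 0) is the
   central element (n, 0) <> 0.
   (ii): S is commutative iff D(S) is, and D(S) is reduced because
   (x - y)^2 = x^2 + y^2 - (xy + yx).  A commutative ring is centrally
   essential.  Conversely, in a reduced centrally essential ring, if
   w = ab - ba <> 0, take central y with z = wy central and non-zero, then
   central t with azt central and zt <> 0; now w(zt) = (azt)b - b(azt) = 0,
   hence (zt)^2 = w(zt)(yt) = 0, contradicting reducedness. *)

Section Quaternion.
Variable R : comPzRingType.

Record quat := Quat { qre : R; qi : R; qj : R; qk : R }.

Definition quat_tuple (q : quat) := (qre q, qi q, qj q, qk q).
Definition tuple_quat (t : R * R * R * R) := let: (a, b, c, d) := t in Quat a b c d.
Lemma quat_tupleK : cancel quat_tuple tuple_quat. Proof. by case. Qed.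
HB.instance Definition _ := Choice.copy quat (can_type quat_tupleK).

Definition addq p q := Quat (qre p + qre q) (qi p + qi q) (qj p + qj q) (qk p + qk q).
Definition oppq q := Quat (- qre q) (- qi q) (- qj q) (- qk q).
Definition mulq p q := Quat
  (qre p * qre q - qi p * qi q - qj p * qj q - qk p * qk q)
  (qre p * qi q + qi p * qre q + qj p * qk q - qk p * qj q)
  (qre p * qj q - qi p * qk q + qj p * qre q + qk p * qi q)
  (qre p * qk q + qi p * qj q - qj p * qi q + qk p * qre q).

Local Ltac quat_ring :=
  by do ?move=> [? ? ? ?]; rewrite /addq /oppq /mulq /=; congr Quat; ring.

Fact addqA : associative addq. Proof. quat_ring. Qed.
Fact addqC : commutative addq. Proof. quat_ring. Qed.
Fact add0q : left_id (Quat 0 0 0 0) addq. Proof. quat_ring. Qed.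
Fact addNq : left_inverse (Quat 0 0 0 0) oppq addq. Proof. quat_ring. Qed.
HB.instance Definition _ := GRing.isZmodule.Build quat addqA addqC add0q addNq.

Fact mulqA : associative mulq. Proof. quat_ring. Qed.
Fact mul1q : left_id (Quat 1 0 0 0) mulq. Proof. quat_ring. Qed.
Fact mulq1 : right_id (Quat 1 0 0 0) mulq. Proof. quat_ring. Qed.
Fact mulqDl : left_distributive mulq addq. Proof. quat_ring. Qed.
Fact mulqDr : right_distributive mulq addq. Proof. quat_ring. Qed.
HB.instance Definition _ := GRing.Zmodule_isPzRing.Build quat
  mulqA mul1q mulq1 mulqDl mulqDr.

Definition qnorm q := qre q ^+ 2 + qi q ^+ 2 + qj q ^+ 2 + qk q ^+ 2.

Lemma qnormM p q : qnorm (p * q) = qnorm p * qnorm q.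
Proof. by case: p => ? ? ? ?; case: q => ? ? ? ?; rewrite /qnorm /=; ring. Qed.

Lemma quat_noncommutative : 2%:R != 0 :> R -> ~ commutative_sr quat.
Proof.
move=> two_neq0 /(_ (Quat 0 1 0 0) (Quat 0 0 1 0)) [].
rewrite !(mul0r, mulr0, mul1r, subr0, sub0r, add0r, addr0).
by move=> _ _ _ /eqP; rewrite -subr_eq0 opprK (negbTE two_neq0).
Qed.
End Quaternion.

Lemma qnorm_eq0 (R : realDomainType) (q : quat R) : qnorm q = 0 -> q = 0.
Proof.
case: q => a b c d; rewrite /qnorm /= => /eqP.
rewrite !paddr_eq0 ?addr_ge0 ?sqr_ge0 // !sqrf_eq0.
by move=> /andP[/andP[/andP[/eqP-> /eqP->] /eqP->] /eqP->].
Qed.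

Lemma quat_no_zero_divisors (R : realDomainType) : no_zero_divisors (quat R).
Proof.
have qnorm0 : qnorm (0 : quat R) = 0 by rewrite /qnorm /= expr0n /= !addr0.
move=> p q /(congr1 (@qnorm R)) /eqP; rewrite qnormM qnorm0 mulf_eq0.
by case/orP => /eqP/qnorm_eq0; [left | right].
Qed.

Section SemiRing.
Variable S : pzSemiRingType.

Lemma central1 : central (1 : S).
Proof. by move=> s; rewrite mul1r mulr1. Qed.

Lemma centralM (x y : S) : central x -> central y -> central (x * y).
Proof. by move=> cx cy s; rewrite -mulrA cy mulrA cx mulrA. Qed.

Lemma commutative_centrally_essential :
  commutative_sr S -> centrally_essential S.
Proof.
move=> mulC x x_neq0; exists 1, x.
split; [exact: mulC | exact: mulC | | exact: x_neq0 | exact: mulr1].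
by move=> one_eq0; apply: x_neq0; rewrite -[x]mulr1 one_eq0 mulr0.
Qed.

Lemma centrally_essential_central_multiple :
  centrally_essential S -> forall x z : S, central z -> z <> 0 ->
  exists t : S, [/\ central t, central (x * z * t) & z * t <> 0].
Proof.
move=> ce x z cz z_neq0; have [xz0 | /eqP xz_neq0] := eqVneq (x * z) 0.
  exists 1; rewrite !mulr1 xz0.
  by split; [exact: central1 | move=> s; rewrite mul0r mulr0 | exact: z_neq0].
have [t [v [ct cv _ v_neq0 xzt]]] := ce _ xz_neq0.
exists t; split; rewrite ?xzt //.
by move=> zt0; apply: v_neq0; rewrite -xzt -mulrA zt0 mulr0.
Qed.

End SemiRing.

Section InjectiveMorphism.
Variables (S T : pzSemiRingType) (f : {rmorphism S -> T}).
Hypothesis f_inj : injective f.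

Lemma add_cancellative_inj : add_cancellative T -> add_cancellative S.
Proof. by move=> cancT x y z /(congr1 f); rewrite !rmorphD => /cancT /f_inj. Qed.

Lemma reduced_inj : reduced T -> reduced S.
Proof.
by move=> redT x y /(congr1 f); rewrite !(rmorphD, rmorphM, rmorphXn) => /redT /f_inj.
Qed.

Lemma commutative_inj : commutative_sr T -> commutative_sr S.
Proof. by move=> mulC x y; apply: f_inj; rewrite !rmorphM mulC. Qed.

End InjectiveMorphism.

Lemma add_cancellative_pair (S T : pzSemiRingType) :
  add_cancellative S -> add_cancellative T -> add_cancellative (S * T)%type.
Proof.
by move=> cancS cancT [x1 x2] [y1 y2] [z1 z2] [/cancS -> /cancT ->].
Qed.

Lemma reduced_pair (S T : pzSemiRingType) :
  reduced S -> reduced T -> reduced (S * T)%type.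
Proof.
move=> redS redT [x1 x2] [y1 y2] e.
have /= := congr1 fst e; rewrite -!expr2 => /redS ->.
by have /= := congr1 snd e; rewrite -!expr2 => /redT ->.
Qed.

Lemma add_cancellative_nat : add_cancellative nat.
Proof. by move=> x y z /addIn. Qed.

Lemma reduced_nat : reduced nat.
Proof. by move=> m n; rewrite !(natrXE, natrDE, natrME); nia. Qed.

Lemma add_cancellative_ring (R : pzRingType) : add_cancellative R.
Proof. by move=> x y z /addIr. Qed.

Section Ring.
Variable R : pzRingType.

Lemma sqrrB_nc (x y : R) : (x - y) ^+ 2 = x ^+ 2 + y ^+ 2 - (x * y + y * x).
Proof. by rewrite !expr2 mulrBl !mulrBr opprB addrACA opprD. Qed.

Lemma reducedP : reduced R <-> forall x : R, x ^+ 2 = 0 -> x = 0.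
Proof.
split=> [redR x x2 | sq_eq0 x y e].
  by apply: redR; rewrite x2 expr2 !(mulr0, mul0r, addr0).
by apply/eqP; rewrite -subr_eq0; apply/eqP/sq_eq0; rewrite sqrrB_nc e subrr.
Qed.

Lemma no_zero_divisors_reduced : no_zero_divisors R -> reduced R.
Proof. by move=> nzd; apply/reducedP => x; rewrite expr2 => /nzd []. Qed.

Lemma commutator_mul_central (a b c : R) :
  central c -> (a * b - b * a) * c = a * c * b - b * (a * c).
Proof. by move=> cc; rewrite mulrBl -!mulrA cc. Qed.

Lemma reduced_centrally_essential_commutative :
  reduced R -> centrally_essential R -> commutative_sr R.
Proof.
move=> /reducedP sq_eq0 ce a b; apply/eqP; rewrite -subr_eq0.
set w := a * b - b * a; apply/negPn/negP => /eqP w_neq0.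
have [y [z [cy cz _ z_neq0 wy]]] := ce w w_neq0.
have [t [ct c_azt zt_neq0]] := centrally_essential_central_multiple ce a cz z_neq0.
have w_zt : w * (z * t) = 0.
  rewrite commutator_mul_central; last exact: centralM.
  by rewrite mulrA c_azt subrr.
apply: zt_neq0; apply: sq_eq0.
by rewrite expr2 -{1}wy -(mulrA w) -mulrA (centralM cy ct) mulrA w_zt mul0r.
Qed.

End Ring.

Section RingOfDifferences.
Variables (S : pzSemiRingType) (R : pzRingType) (f : {rmorphism S -> R}).
Hypothesis f_diff : ring_of_differences f.

Lemma differences_reduced : reduced S -> reduced R.
Proof.
case: f_diff => f_inj f_onto redS; apply/reducedP => r.
have [x [y ->]] := f_onto r.
rewrite sqrrB_nc -!rmorphXn -!rmorphM -!rmorphD => /eqP; rewrite subr_eq0.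
by move=> /eqP/f_inj/redS ->; rewrite subrr.
Qed.

Lemma differences_commutative : commutative_sr S <-> commutative_sr R.
Proof.
case: f_diff => f_inj f_onto; split=> [mulC r s|]; last exact: commutative_inj f_inj.
have comm_f x y : GRing.comm (f x) (f y) by rewrite /GRing.comm -!rmorphM mulC.
have [x1 [x2 ->]] := f_onto r; have [y1 [y2 ->]] := f_onto s.
by apply: commrB; apply/commr_sym/commrB; apply: comm_f.
Qed.

End RingOfDifferences.

Section PosExt.
Variable R : pzRingType.

Definition posext_pred : {pred nat * R} := [pred x | (0 < x.1)%N || (x == 0)].

Fact posext_semiring_closed : semiring_closed posext_pred.
Proof.
split; split=> [|x y]; rewrite ?inE ?eqxx ?orbT //.
- case/orP=> [x_gt0 | /eqP->]; rewrite ?add0r //.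
  by case/orP=> [y_gt0 | /eqP->]; rewrite ?addr0 ?x_gt0 // addn_gt0 x_gt0.
- case/orP=> [x_gt0 | /eqP->]; rewrite ?mul0r ?eqxx ?orbT //.
  by case/orP=> [y_gt0 | /eqP->]; rewrite ?mulr0 ?eqxx ?orbT //= natrME muln_gt0 x_gt0 y_gt0.
Qed.

Record posext := PosExt { posext_val : nat * R; _ : posext_val \in posext_pred }.
HB.instance Definition _ := [isSub for posext_val].
HB.instance Definition _ := [Choice of posext by <:].
HB.instance Definition _ := GRing.SubChoice_isSubPzSemiRing.Build
  (nat * R)%type posext_pred posext posext_semiring_closed.

Lemma posext_fst_gt0 (x : posext) : x != 0 -> (0 < (val x).1)%N.
Proof.
move=> x_neq0; have := valP x; rewrite inE => /orP[// | /eqP x0].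
by case/eqP: x_neq0; apply: val_inj; rewrite x0 rmorph0.
Qed.

Fact posext_nat_subproof (n : nat) : (n, 0) \in posext_pred.
Proof. by case: n => [|n]; rewrite inE ?eqxx. Qed.

Definition posext_nat (n : nat) : posext := PosExt (posext_nat_subproof n).

Lemma posext_nat_eq0 (n : nat) : (posext_nat n == 0) = (n == 0%N).
Proof. by rewrite -(inj_eq val_inj) rmorph0 xpair_eqE eqxx andbT. Qed.

Lemma posext_nat_central (n : nat) : central (posext_nat n).
Proof.
move=> s; apply: val_inj; rewrite !rmorphM; case: (val s) => m r.
by congr pair; [exact: mulnC | rewrite mul0r mulr0].
Qed.

Lemma posext_centrally_essential : centrally_essential posext.
Proof.
move=> x /eqP x_neq0; exists (posext_nat 1), (posext_nat (val x).1).
split; try exact: posext_nat_central.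
- by move/eqP; rewrite posext_nat_eq0.
- by move/eqP; rewrite posext_nat_eq0; apply/negP; rewrite -lt0n posext_fst_gt0.
- apply: val_inj; rewrite rmorphM /=; case: (posext_val x) => m r.
  by congr pair; [exact: mulr1 | exact: mulr0].
Qed.

Lemma posext_no_zero_divisors : no_zero_divisors posext.
Proof.
move=> x y xy0; have [|x_neq0] := eqVneq x 0; [by left | right].
apply/eqP; apply: contraT => y_neq0.
have : (0 < (val (x * y)%R).1)%N by rewrite rmorphM /= natrME muln_gt0 !posext_fst_gt0.
by rewrite xy0 rmorph0.
Qed.

Fact posext_embed_subproof (r : R) : (1%N, r) \in posext_pred.
Proof. by rewrite inE. Qed.

Definition posext_embed (r : R) : posext := PosExt (posext_embed_subproof r).

Lemma posext_noncommutative : ~ commutative_sr R -> ~ commutative_sr posext.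
Proof.
move=> ncR mulC; apply: ncR => a b.
by have /= := congr1 (fun x => (val x).2) (mulC (posext_embed a) (posext_embed b)).
Qed.

Lemma posext_add_cancellative : add_cancellative posext.
Proof.
apply: (add_cancellative_inj (f := val) val_inj).
exact: add_cancellative_pair add_cancellative_nat (@add_cancellative_ring R).
Qed.

Lemma posext_reduced : reduced R -> reduced posext.
Proof.
move=> redR; apply: (reduced_inj (f := val) val_inj).
exact: reduced_pair reduced_nat redR.
Qed.

End PosExt.

Theorem theorem1p2 :
  (exists S : pzSemiRingType,
      ~ commutative_sr S /\ add_cancellative S /\ reduced S /\
      centrally_essential S /\ no_zero_divisors S)
  /\
  (forall (S : pzSemiRingType) (R : pzRingType) (f : {rmorphism S -> R}),
      add_cancellative S -> reduced S -> ring_of_differences f ->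
      (commutative_sr S <-> centrally_essential R)).
Proof.
split.
  exists (posext (quat int)); split; [|split; [|split; [|split]]].
  - exact/posext_noncommutative/quat_noncommutative.
  - exact: posext_add_cancellative.
  - exact/posext_reduced/no_zero_divisors_reduced/quat_no_zero_divisors.
  - exact: posext_centrally_essential.
  - exact: posext_no_zero_divisors.
(* cancellativity of S is implied by the injectivity of f *)
move=> S R f _ redS f_diff; rewrite (differences_commutative f_diff).
split; first exact: commutative_centrally_essential.
exact: reduced_centrally_essential_commutative (differences_reduced f_diff redS).
Qed.
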